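(* Let $k\ge1$, $a_i,b_i,c_i\in\mathbb{C}$ ($1\le i\le k$), with symbol $f$ and tridiagonal $k$-Toeplitz operator $T(f)$ as in the context. For $\lambda\in\mathbb{C}\setminus\sigma_{ess}(T(f))$ and $z\in\mathbb{C}\setminus\{0\}$, $$\det(f(z)-\lambda I)=(-1)^{k+1}\Big(\prod_{i=1}^kc_i\Big)z+(-1)^{k+1}\Big(\prod_{i=1}^kb_i\Big)z^{-1}+g(\lambda),$$ where $g(\lambda)=\det(A_0-\lambda I)-b_kc_k\,p(\lambda)$ is a polynomial in $\lambda$ of degree $k$, with $p(\lambda)=0$ if $k=1$, $p(\lambda)=1$ if $k=2$, and for $k\ge3$, $p(\lambda)$ the determinant of the $(k-2)\times(k-2)$ tridiagonal matrix with diagonal $a_2-\lambda,\dots,a_{k-1}-\lambda$, superdiagonal $b_2,\dots,b_{k-2}$ and subdiagonal $c_2,\dots,c_{k-2}$. In particular, there are at most $2k$ values $\lambda\in\mathbb{C}$ for which the equation $\det(f(z)-\lambda I)=0$ (in $z$) admits a double root.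
   Context: The tridiagonal $k$-Toeplitz operator $T(f)$ on $\ell^2(\mathbb{N})$ has matrix entries $(i,i)=a_{p(i)}$, $(i,i+1)=b_{p(i)}$, $(i+1,i)=c_{p(i)}$ with index map $i\mapsto((i-1)\bmod k)+1$, all other entries zero. Its symbol is $f(z)=A_{-1}z^{-1}+A_0+A_1z$, where $A_0$ is the $k\times k$ tridiagonal matrix with diagonal $a_1,\dots,a_k$, superdiagonal $b_1,\dots,b_{k-1}$, subdiagonal $c_1,\dots,c_{k-1}$; $A_{-1}$ has single nonzero entry $b_k$ at $(k,1)$; $A_1$ has single nonzero entry $c_k$ at $(1,k)$ (for $k=1$, $f(z)=a_1+c_1z+b_1z^{-1}$). $\sigma_{ess}$ denotes the essential spectrum. *)

From HB Require Import structures.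
From mathcomp Require Import all_boot all_order all_algebra.
From mathcomp Require Import complex.
From mathcomp Require Import reals.
Set Implicit Arguments. Unset Strict Implicit. Unset Printing Implicit Defensive.
Import Order.TTheory GRing.Theory Num.Theory.
Local Open Scope ring_scope.

Section Defs.
Variable R : realType.
Local Notation C := R[i].

(* Coefficients a b c : nat -> C are 1-indexed: a 1, ..., a k (values elsewhere irrelevant). *)

Definition tridiag (m : nat) (d u l : nat -> C) : 'M[C]_m :=
  \matrix_(i < m, j < m)
    if i == j :> nat then d i
    else if j == i.+1 :> nat then u i
    else if i == j.+1 :> nat then l j
    else 0.

Definition A0 (k : nat) (a b c : nat -> C) : 'M[C]_k :=
  tridiag k (fun i => a i.+1) (fun i => b i.+1) (fun i => c i.+1).

Definition Am1 (k : nat) (b : nat -> C) : 'M[C]_k :=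
  \matrix_(i < k, j < k) if (i == k.-1 :> nat) && (j == 0 :> nat) then b k else 0.

Definition A1 (k : nat) (c : nat -> C) : 'M[C]_k :=
  \matrix_(i < k, j < k) if (i == 0 :> nat) && (j == k.-1 :> nat) then c k else 0.

Definition symbol (k : nat) (a b c : nat -> C) (z : C) : 'M[C]_k :=
  z^-1 *: Am1 k b + A0 k a b c + z *: A1 k c.

Definition pfun (k : nat) (a b c : nat -> C) (l : C) : C :=
  if k == 1%N then 0
  else if k == 2%N then 1
  else \det (tridiag (k - 2) (fun i => a (i + 2)%N - l)
                             (fun i => b (i + 2)%N) (fun i => c (i + 2)%N)).

Definition gfun (k : nat) (a b c : nat -> C) (l : C) : C :=
  \det (A0 k a b c - l%:M) - b k * c k * pfun k a b c l.

Definition sqmod (x : C) : R := complex.Re x ^+ 2 + complex.Im x ^+ 2.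

(* square-summable sequences (0-indexed: x 0 is the first coordinate) *)
Definition l2 (x : nat -> C) : Prop :=
  exists M : R, forall N, \sum_(n < N) sqmod (x n) <= M.

Definition l2norm2_le (x : nat -> C) (e : R) : Prop :=
  forall N, \sum_(n < N) sqmod (x n) <= e.

(* T(f) - lambda I acting on sequences. Row n (0-indexed) is row n+1 of the
   paper's matrix, with period map p(i) = ((i-1) mod k) + 1. *)
Definition Tminus (k : nat) (a b c : nat -> C) (l : C) (x : nat -> C) : nat -> C :=
  fun n => (a (n %% k).+1 - l) * x n + b (n %% k).+1 * x n.+1
           + (if n is m.+1 then c (m %% k).+1 * x m else 0).

Definition lincomb (s : seq (nat -> C)) (co : nat -> C) : nat -> C :=
  fun n => \sum_(j < size s) co j * nth (fun _ => 0) s j n.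

(* T(f) - lambda I is Fredholm on l^2(N): finite dimensional kernel,
   closed range, finite dimensional cokernel *)
Definition Fredholm_Tminus (k : nat) (a b c : nat -> C) (l : C) : Prop :=
  [/\
      exists s : seq (nat -> C), (forall j, (j < size s)%N -> l2 (nth (fun _ => 0) s j)) /\
        forall x, l2 x -> Tminus k a b c l x = (fun _ => 0) ->
          exists co, x = lincomb s co,
      forall y, l2 y ->
        (forall e : R, 0 < e -> exists x, l2 x /\
            l2norm2_le (fun n => Tminus k a b c l x n - y n) e) ->
        exists x, l2 x /\ Tminus k a b c l x = y &
      exists s : seq (nat -> C), (forall j, (j < size s)%N -> l2 (nth (fun _ => 0) s j)) /\
        forall y, l2 y -> exists x co, l2 x /\
          y = (fun n => Tminus k a b c l x n + lincomb s co n)].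

Definition in_sigma_ess (k : nat) (a b c : nat -> C) (l : C) : Prop :=
  ~ Fredholm_Tminus k a b c l.

(* z0 is a double root (z0 <> 0) of the equation det(f(z) - lambda I) = 0:
   clearing denominators, z^m det(f(z) - lambda I) = P(z) on C\{0} for a
   polynomial P, and z0 is a root of P of multiplicity >= 2. *)
Definition double_root (k : nat) (a b c : nat -> C) (l z0 : C) : Prop :=
  z0 != 0 /\ exists (P : {poly C}) (m : nat),
    (forall z, z != 0 -> P.[z] = z ^+ m * \det (symbol k a b c z - l%:M)) /\
    (('X - z0%:P) ^+ 2 %| P)%R.

End Defs.

From HB Require Import structures.
From mathcomp Require Import all_boot all_order all_algebra.
From mathcomp Require Import complex.
From mathcomp Require Import reals.
From mathcomp Require Import ring zify.
Set Implicit Arguments. Unset Strict Implicit. Unset Printing Implicit Defensive.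
Import Order.TTheory GRing.Theory Num.Theory.
Local Open Scope ring_scope.

(* f(z) - l differs from the tridiagonal matrix A_0 - l only by the corner
   entries z^-1 b_k at (k,1) and z c_k at (1,k).  Expanding the determinant
   along them, the two corner cofactors of a tridiagonal matrix are triangular
   minors with determinants prod c_i and prod b_i, while the term using both
   corners carries z^-1 z = 1 times the inner tridiagonal minor p(l); the
   constant part g(l) has degree k because det(A_0 - l) is a characteristic
   polynomial up to sign.  Hence z det(f(z) - l) = C z^2 + g(l) z + B, which
   has a double root only if g(l)^2 = 4 C B, a polynomial equation of degree
   2k in l. *)

Lemma det_add_delta (R : comNzRingType) n (A : 'M[R]_n) i j x :
  \det (A + x *: delta_mx i j) = \det A + x * cofactor A i j.
Proof.
have cofE j' : cofactor (A + x *: delta_mx i j) i j' = cofactor A i j'.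
  rewrite /cofactor; congr (_ * \det _); apply/matrixP => r s.
  by rewrite !mxE eq_sym (negbTE (neq_lift i r)) /= mulr0 addr0.
rewrite (expand_det_row _ i) (expand_det_row A i).
under eq_bigr => j' _ do rewrite cofE !mxE eqxx /= mulrDl.
rewrite big_split /=; congr (_ + _).
rewrite (bigD1 j) //= eqxx mulr1 big1 ?addr0 // => j' /negbTE ->.
by rewrite mulr0 mul0r.
Qed.

Lemma det_add_corners (R : comNzRingType) n (A : 'M[R]_n.+2) x y :
  \det (A + x *: delta_mx ord_max ord0 + y *: delta_mx ord0 ord_max) =
  \det A + x * cofactor A ord_max ord0 + y * cofactor A ord0 ord_max
  - x * y * \det (row' ord_max (col' ord0 (row' ord0 (col' ord_max A)))).
Proof.
have minorD : row' ord0 (col' ord_max (A + x *: delta_mx ord_max ord0)) =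
              row' ord0 (col' ord_max A) + x *: delta_mx ord_max ord0.
  by apply/matrixP => i j; rewrite !mxE -!val_eqE /= /bump leq0n leqNgt ltn_ord.
rewrite !det_add_delta {2}/cofactor minorD det_add_delta /cofactor /= !addn0.
(* [ring] cannot use (-1)^+n * (-1)^+n = 1; reducing n to its parity can. *)
by rewrite exprS -signr_odd; case: odd; ring.
Qed.

Lemma det_sub_scalar (R : comNzRingType) n (A : 'M[R]_n) l :
  \det (A - l%:M) = (-1) ^+ n * (char_poly A).[l].
Proof.
rewrite /char_poly -[_.[l]]/(horner_eval l _) -det_map_mx -detZ.
congr (\det _); apply/matrixP => i j; rewrite !mxE /horner_eval /=.
by case: (i == j); rewrite /= horner_evalE !hornerE; ring.
Qed.

Lemma poly_eq_on_nonzero (R : numDomainType) (p q : {poly R}) :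
  (forall z, z != 0 -> p.[z] = q.[z]) -> p = q.
Proof.
move=> pq; apply/eqP; rewrite -subr_eq0; apply/eqP.
apply: (@roots_geq_poly_eq0 _ _ (mkseq (fun i => i.+1%:R) (size (p - q)))).
- apply/allP => _ /mapP [i _ ->].
  by rewrite /root !hornerE pq ?subrr // pnatr_eq0.
- by rewrite map_inj_uniq ?iota_uniq // => i j /eqP; rewrite eqr_nat => /eqP [].
- by rewrite size_mkseq.
Qed.

Lemma closed_field_root_seq (F : closedFieldType) (p : {poly F}) : p != 0 ->
  exists2 s : seq F, size s = (size p).-1 & forall x, root p x -> x \in s.
Proof.
move=> p0; have [s ps] := closed_field_poly_normal p.
exists s => [|x].
  by rewrite [in RHS]ps size_scale ?lead_coef_eq0 // size_prod_XsubC.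
by rewrite [p]ps rootZ ?lead_coef_eq0 // root_prod_XsubC.
Qed.

Lemma double_root_quadratic_discr (F : fieldType) (u v w z0 : F) :
  ('X - z0%:P) ^+ 2 %| u *: 'X^2 + v *: 'X + w%:P -> v ^+ 2 = 4%:R * u * w.
Proof.
set q := _ + _ + _ => /dvdpP [h qE].
have q_z0 : q.[z0] = 0.
  by rewrite qE hornerM horner_exp hornerXsubC subrr expr0n mulr0.
have dq_z0 : q^`().[z0] = 0.
  rewrite qE expr2 !derivM derivXsubC !(hornerXsubC, hornerM, hornerD) subrr.
  by rewrite !(mulr0, mul0r, addr0, add0r).
have discrE : q^`().[z0] ^+ 2 - 4%:R * u * q.[z0] = v ^+ 2 - 4%:R * u * w.
  rewrite /q !derivE.
  by rewrite !(hornerD, hornerZ, hornerMn, hornerXn, hornerX, hornerC); ring.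
by apply/eqP; rewrite -subr_eq0 -discrE q_z0 dq_z0 expr0n mulr0 subr0.
Qed.

Section TridiagonalSymbol.
Variable R : realType.
Local Notation C := R[i].
Implicit Types (a b c d up lo : nat -> C) (z l : C).

Local Ltac tridiag_entry :=
  rewrite !mxE lift0 lift_max; do ![case: eqP => ? //=; try lia].

Lemma cofactor_tridiag_0max n d up lo :
  cofactor (tridiag n.+2 d up lo) ord0 ord_max =
  (-1) ^+ n.+1 * \prod_(i < n.+1) lo i.
Proof.
rewrite /cofactor -det_tr det_trig; last first.
  by apply/is_trig_mxP => i j /= ltij; tridiag_entry.
congr (_ * _); apply: eq_bigr => i _.
by tridiag_entry.
Qed.

Lemma cofactor_tridiag_max0 n d up lo :
  cofactor (tridiag n.+2 d up lo) ord_max ord0 =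
  (-1) ^+ n.+1 * \prod_(i < n.+1) up i.
Proof.
rewrite /cofactor det_trig; last first.
  by apply/is_trig_mxP => i j /= ltij; tridiag_entry.
rewrite addn0; congr (_ * _); apply: eq_bigr => i _.
by tridiag_entry.
Qed.

Lemma tridiag_inner_minor n d up lo :
  row' ord_max (col' ord0 (row' ord0 (col' ord_max (tridiag n.+2 d up lo)))) =
  tridiag n (fun i => d i.+1) (fun i => up i.+1) (fun i => lo i.+1).
Proof. by apply/matrixP => i j; rewrite !mxE !lift0 !lift_max !eqSS. Qed.

Lemma tridiag_sub_scalar m d up lo l :
  tridiag m d up lo - l%:M = tridiag m (fun i => d i - l) up lo.
Proof.
by apply/matrixP => i j; rewrite !mxE -val_eqE; case: eqP; rewrite ?mulr0n ?subr0.
Qed.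

Lemma symbol_sub_scalar n a b c z l :
  symbol n.+2 a b c z - l%:M =
  A0 n.+2 a b c - l%:M + (z^-1 * b n.+2) *: delta_mx ord_max ord0
                       + (z * c n.+2) *: delta_mx ord0 ord_max.
Proof.
apply/matrixP => i j; rewrite !mxE -!val_eqE /=.
by do 2 case: (_ && _); rewrite /=; ring.
Qed.

Lemma pfunE n a b c l : pfun n.+2 a b c l =
  \det (tridiag n (fun i => a i.+2 - l) (fun i => b i.+2) (fun i => c i.+2)).
Proof.
case: n => [|n]; first by rewrite det_mx00.
by rewrite /pfun /=; congr (\det _); apply/matrixP => i j; rewrite !mxE !addn2.
Qed.

Lemma det_symbol_sub_scalar k a b c z l : (0 < k)%N -> z != 0 ->
  \det (symbol k a b c z - l%:M) =
    (-1) ^+ k.+1 * (\prod_(1 <= i < k.+1) c i) * z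
  + (-1) ^+ k.+1 * (\prod_(1 <= i < k.+1) b i) * z^-1
  + gfun k a b c l.
Proof.
case: k => [//|[|n]] _ z0.
  (* for k = 1 both corner entries sit at (1,1) *)
  by rewrite /gfun /pfun !det_mx11 !big_nat1 !mxE /=; ring.
rewrite symbol_sub_scalar det_add_corners /gfun /A0 tridiag_sub_scalar.
rewrite cofactor_tridiag_0max cofactor_tridiag_max0 tridiag_inner_minor -pfunE.
rewrite !(big_nat_recr n.+2) // !big_add1 /= !big_mkord.
rewrite [z^-1 * _ * (z * _)]mulrACA mulVf // mul1r.
by rewrite !exprS -signr_odd; case: odd; ring.
Qed.

Lemma pfun_poly k a b c : (0 < k)%N ->
  exists2 Q : {poly C}, (size Q <= k.-1)%N & forall l, Q.[l] = pfun k a b c l.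
Proof.
case: k => [//|[|n]] _; first by exists 0 => [|l]; rewrite ?size_poly0 ?horner0.
exists ((-1) ^+ n *: char_poly (tridiag n (fun i => a i.+2) (fun i => b i.+2)
                                         (fun i => c i.+2))).
  by rewrite (leq_trans (size_scale_leq _ _)) // size_char_poly.
by move=> l; rewrite hornerZ -det_sub_scalar pfunE tridiag_sub_scalar.
Qed.

Lemma gfun_poly k a b c : (0 < k)%N ->
  exists G : {poly C}, size G = k.+1 /\ forall l, G.[l] = gfun k a b c l.
Proof.
move=> k_gt0; have [Q sizeQ QE] := pfun_poly a b c k_gt0.
exists ((-1) ^+ k *: char_poly (A0 k a b c) - (b k * c k) *: Q); split.
  have size_charZ : size ((-1) ^+ k *: char_poly (A0 k a b c)) = k.+1.
    by rewrite size_scale ?signr_eq0 // size_char_poly.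
  rewrite size_polyDl size_charZ // size_polyN.
  rewrite (leq_ltn_trans (size_scale_leq _ _)) //.
  by rewrite ltnS (leq_trans sizeQ) ?leq_pred.
by move=> l; rewrite hornerD hornerN !hornerZ QE -det_sub_scalar.
Qed.

Lemma double_root_symbol_discr k a b c l z0 : (0 < k)%N ->
  double_root k a b c l z0 ->
  gfun k a b c l ^+ 2 = 4%:R * ((-1) ^+ k.+1 * \prod_(1 <= i < k.+1) c i)
                             * ((-1) ^+ k.+1 * \prod_(1 <= i < k.+1) b i).
Proof.
move=> k_gt0 [z0_neq0 [P [m [PE dvdP]]]].
pose u := (-1) ^+ k.+1 * \prod_(1 <= i < k.+1) c i.
pose w := (-1) ^+ k.+1 * \prod_(1 <= i < k.+1) b i.
set v := gfun k a b c l; pose q := u *: 'X^2 + v *: 'X + w%:P.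
have XPE : 'X * P = 'X ^+ m * q.
  apply: poly_eq_on_nonzero => z z_neq0.
  rewrite !(hornerM, hornerXn, hornerD, hornerZ, hornerX, hornerC) PE //.
  rewrite det_symbol_sub_scalar // -/u -/w -/v mulrCA; congr (_ * _).
  (* otherwise [ring] unfolds the signs (-1)^+k.+1, which it cannot handle *)
  clearbody u w v.
  by rewrite !mulrDr [z * (w * _)]mulrCA mulfV //; ring.
apply: (@double_root_quadratic_discr _ _ _ _ z0).
have coprime_Xm : coprimep (('X - z0%:P) ^+ 2) ('X ^+ m).
  apply/coprimep_expl/coprimep_expr.
  by rewrite coprimep_sym coprimep_XsubC rootX.
by have := dvdp_mull 'X dvdP; rewrite XPE Gauss_dvdpr.
Qed.

End TridiagonalSymbol.

Theorem lemmaA1 (R : realType) (k : nat) (a b c : nat -> R[i]) :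
  (0 < k)%N ->
  (exists G : {poly R[i]}, size G = k.+1 /\ forall l, G.[l] = gfun k a b c l) /\
  (forall l z : R[i], ~ in_sigma_ess k a b c l -> z != 0 ->
     \det (symbol k a b c z - l%:M) =
       (-1) ^+ k.+1 * (\prod_(1 <= i < k.+1) c i) * z
     + (-1) ^+ k.+1 * (\prod_(1 <= i < k.+1) b i) * z^-1
     + gfun k a b c l) /\
  (exists s : seq R[i], (size s <= 2 * k)%N /\
     forall l, (exists z0, double_root k a b c l z0) -> l \in s).
Proof.
move=> k_gt0; have [G [sizeG GE]] := gfun_poly a b c k_gt0.
split; first by exists G.
split; first by move=> l z _; apply: det_symbol_sub_scalar.
pose u := (-1) ^+ k.+1 * \prod_(1 <= i < k.+1) c i.
pose w := (-1) ^+ k.+1 * \prod_(1 <= i < k.+1) b i.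
pose D := G ^+ 2 - (4%:R * u * w)%:P.
have sizeD : size D = (2 * k).+1.
  have sizeG2 : size (G ^+ 2) = (2 * k).+1.
    have : G ^+ 2 != 0 by rewrite expf_neq0 // -size_poly_eq0 sizeG.
    by rewrite -size_poly_gt0 => /prednK <-; rewrite size_exp sizeG mulnC.
  rewrite size_polyDl sizeG2 // size_polyN.
  by rewrite (leq_ltn_trans (size_polyC_leq1 _)) // ltnS muln_gt0.
have [|s sizes Droots] := @closed_field_root_seq _ D.
  by rewrite -size_poly_eq0 sizeD.
exists s; split; first by rewrite sizes sizeD.
move=> l [z0 /(double_root_symbol_discr k_gt0) discr]; apply: Droots.
by rewrite /root /D hornerD hornerN horner_exp GE discr hornerC subrr.
Qed.
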